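(* An algebra $\langle M,+,\vee,\wedge,0,1,-1\rangle$ (arities $2,2,2,0,0,0$) is isomorphic to a subalgebra of the $\{+,\vee,\wedge,0,1,-1\}$-reduct of some unital commutative lattice-ordered group (with $1$ interpreted as the strong unit and $-1$ as its inverse) if and only if it is a cancellative unital commutative distributive $\ell$-monoid.
   Context: A \emph{unital commutative distributive $\ell$-monoid} is an algebra $\langle M,+,\vee,\wedge,0,1,-1\rangle$ such that: $\langle M,\vee,\wedge\rangle$ is a distributive lattice (with order $\le$); $\langle M,+,0\rangle$ is a commutative monoid; $+$ distributes over $\vee$ and $\wedge$; $-1+1=0$; $-1\le 0\le 1$; and for every $x\in M$ there is $n\in\mathbb{N}\setminus\{0\}$ with $(-1)+\dots+(-1)\le x\le 1+\dots+1$ ($n$ summands each). It is \emph{cancellative} if $x+z=y+z$ implies $x=y$. A unital commutative $\ell$-group is a commutative lattice-ordered group with a strong unit $u\ge 0$ (for every $g$ there is $n$ with $g\le nu$). *)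

From Stdlib Require Import Arith.

Fixpoint nmul {T : Type} (add : T -> T -> T) (z : T) (n : nat) (a : T) : T :=
  match n with
  | O => z
  | S k => add a (nmul add z k a)
  end.

Definition is_lattice {T : Type} (join meet : T -> T -> T) : Prop :=
  (forall x y z, join x (join y z) = join (join x y) z) /\
  (forall x y z, meet x (meet y z) = meet (meet x y) z) /\
  (forall x y, join x y = join y x) /\
  (forall x y, meet x y = meet y x) /\
  (forall x y, join x (meet x y) = x) /\
  (forall x y, meet x (join x y) = x).

Definition is_distr_lattice {T : Type} (join meet : T -> T -> T) : Prop :=
  is_lattice join meet /\
  (forall x y z, meet x (join y z) = join (meet x y) (meet x z)).

Definition lle {T : Type} (meet : T -> T -> T) (x y : T) : Prop := meet x y = x.

Definition is_com_monoid {T : Type} (add : T -> T -> T) (z : T) : Prop :=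
  (forall x y w, add x (add y w) = add (add x y) w) /\
  (forall x y, add x y = add y x) /\
  (forall x, add z x = x).

Definition is_ucdl_monoid {M : Type} (add join meet : M -> M -> M)
    (zero one mone : M) : Prop :=
  is_distr_lattice join meet /\
  is_com_monoid add zero /\
  (forall x y w, add x (join y w) = join (add x y) (add x w)) /\
  (forall x y w, add x (meet y w) = meet (add x y) (add x w)) /\
  add mone one = zero /\
  lle meet mone zero /\ lle meet zero one /\
  (forall x, exists n, 0 < n /\
     lle meet (nmul add zero n mone) x /\ lle meet x (nmul add zero n one)).

Definition cancellative {M : Type} (add : M -> M -> M) : Prop :=
  forall x y w, add x w = add y w -> x = y.

Definition is_ucl_group {G : Type} (add : G -> G -> G) (opp : G -> G) (zero : G)
    (join meet : G -> G -> G) (u : G) : Prop :=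
  is_com_monoid add zero /\
  (forall x, add (opp x) x = zero) /\
  is_lattice join meet /\
  (forall x y w, lle meet x y -> lle meet (add x w) (add y w)) /\
  lle meet zero u /\
  (forall g, exists n, lle meet g (nmul add zero n u)).

Definition is_embedding {M G : Type}
    (addM joinM meetM : M -> M -> M) (zeroM oneM moneM : M)
    (addG joinG meetG : G -> G -> G) (zeroG oneG moneG : G) (f : M -> G) : Prop :=
  (forall x y, f x = f y -> x = y) /\
  (forall x y, f (addM x y) = addG (f x) (f y)) /\
  (forall x y, f (joinM x y) = joinG (f x) (f y)) /\
  (forall x y, f (meetM x y) = meetG (f x) (f y)) /\
  f zeroM = zeroG /\ f oneM = oneG /\ f moneM = moneG.

(* If M sits inside a unital l-group G, then translations of G are order automorphisms and
   [x |-> c - x] is an order-reversing involution; hence + distributes over joins and meets,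
   [(x ⊓ y) + (x ⊔ y) = x + y], and this identity forces the lattice to be distributive. All
   the defining identities of a cancellative ucdl-monoid then pass to M along the embedding, and a
   strong unit u of G bounds every element between [n(-u)] and [nu].
   Conversely, a cancellative ucdl-monoid embeds into its group of formal differences [a - b],
   with [(a - b) ⊔ (c - d) = ((a + d) ⊔ (c + b)) - (b + d)]; cancellativity makes the identification
   of differences transitive and the embedding [x |-> x - 0] injective, and the bounds
   [n(-1) <= x <= n1] make 1 a strong unit. *)

From Stdlib Require Import Lia Morphisms.
From Stdlib Require Import ClassicalEpsilon FunctionalExtensionality PropExtensionality.
From Stdlib Require Import ProofIrrelevance.

Declare Scope alg_scope.
Reserved Notation "x ⊔ y" (at level 48, left associativity).
Reserved Notation "x ⊓ y" (at level 48, left associativity).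

Section ComMonoid.
Context {T : Type} {add : T -> T -> T} {zero : T} (HC : is_com_monoid add zero).
Local Notation "x + y" := (add x y) : alg_scope.
Local Notation "0" := zero : alg_scope.
Local Notation "x *+ n" := (nmul add zero n x) (at level 40, left associativity) : alg_scope.
Local Open Scope alg_scope.

Lemma cm_addA x y w : x + (y + w) = x + y + w. Proof. apply HC. Qed.
Lemma cm_addC x y : x + y = y + x. Proof. apply HC. Qed.
Lemma cm_add0l x : 0 + x = x. Proof. apply HC. Qed.
Lemma cm_add0r x : x + 0 = x. Proof. rewrite cm_addC; apply cm_add0l. Qed.
Lemma cm_addCA x y w : x + (y + w) = y + (x + w).
Proof. rewrite !cm_addA, (cm_addC x y); reflexivity. Qed.
Lemma cm_bubble y r x r' : r = x + r' -> y + r = x + (y + r').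
Proof. intros ->; apply cm_addCA. Qed.

Lemma cm_nmulD a b x : x *+ (a + b)%nat = x *+ a + x *+ b.
Proof. induction a as [|a IH]; simpl; [rewrite cm_add0l | rewrite IH, cm_addA]; reflexivity. Qed.
End ComMonoid.

Lemma nmul_morph {A B : Type} (addA : A -> A -> A) (zA : A) (addB : B -> B -> B) (zB : B)
  (f : A -> B) : f zA = zB -> (forall x y, f (addA x y) = addB (f x) (f y)) ->
  forall n x, f (nmul addA zA n x) = nmul addB zB n (f x).
Proof. intros f0 fadd n x; induction n as [|n IH]; simpl; [|rewrite fadd, IH]; auto. Qed.

(* Proves an equation between sums that agree up to associativity and commutativity: both
   sides are right-associated, then the summands of the left side are moved to the front of
   the right side one by one. *)
Ltac ac_bubble add HC x :=
  match goal with
  | |- add x _ = add x _ => reflexivity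
  | |- add _ x = add x _ => apply (cm_addC HC)
  | |- add _ _ = add x _ => eapply (cm_bubble HC); ac_bubble add HC x
  end.
Ltac ac_peel add HC :=
  match goal with
  | |- ?a = ?a => reflexivity
  | |- add ?x _ = add ?x _ => apply (f_equal (add x)); ac_peel add HC
  | |- add ?x _ = ?R =>
      let E := fresh in
      eassert (E : R = add x _) by ac_bubble add HC x;
      rewrite E; clear E; apply (f_equal (add x)); ac_peel add HC
  end.
Ltac ac_solve HC :=
  lazymatch type of HC with
  | is_com_monoid ?add _ => repeat rewrite <- (cm_addA HC); ac_peel add HC
  end.

Section Lattice.
Context {T : Type} {join meet : T -> T -> T} (HL : is_lattice join meet).
Local Notation "x ⊔ y" := (join x y) : alg_scope.
Local Notation "x ⊓ y" := (meet x y) : alg_scope.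
Local Notation "x <= y" := (lle meet x y) : alg_scope.
Local Open Scope alg_scope.

Lemma joinA x y w : x ⊔ (y ⊔ w) = x ⊔ y ⊔ w. Proof. apply HL. Qed.
Lemma meetA x y w : x ⊓ (y ⊓ w) = x ⊓ y ⊓ w. Proof. apply HL. Qed.
Lemma joinC x y : x ⊔ y = y ⊔ x. Proof. apply HL. Qed.
Lemma meetC x y : x ⊓ y = y ⊓ x. Proof. apply HL. Qed.
Lemma joinKI x y : x ⊔ (x ⊓ y) = x. Proof. apply HL. Qed.
Lemma meetKU x y : x ⊓ (x ⊔ y) = x. Proof. apply HL. Qed.
Lemma meetxx x : x ⊓ x = x.
Proof. rewrite <- (joinKI x x) at 2; apply meetKU. Qed.
Lemma joinxx x : x ⊔ x = x.
Proof. rewrite <- (meetKU x x) at 2; apply joinKI. Qed.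
Lemma joinACA_idem x y w : (x ⊔ y) ⊔ (x ⊔ w) = x ⊔ (y ⊔ w).
Proof. rewrite joinA, <- (joinA x y x), (joinC y x), joinA, joinxx, <- joinA; reflexivity. Qed.

Lemma lle_refl x : x <= x. Proof. apply meetxx. Qed.
Lemma lle_trans x y w : x <= y -> y <= w -> x <= w.
Proof. unfold lle; intros Hxy Hyw. rewrite <- Hxy at 1; rewrite <- meetA, Hyw; exact Hxy. Qed.
Lemma lle_antisym x y : x <= y -> y <= x -> x = y.
Proof. unfold lle; intros Hxy Hyx. rewrite <- Hxy, meetC; exact Hyx. Qed.
Lemma lle_join x y : x <= y <-> x ⊔ y = y.
Proof.
  unfold lle; split; intro H; rewrite <- H; [rewrite joinC, meetC; apply joinKI | apply meetKU].
Qed.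
Lemma lle_meetl x y : x ⊓ y <= x.
Proof. unfold lle; rewrite meetC, meetA, meetxx; reflexivity. Qed.
Lemma lle_meetr x y : x ⊓ y <= y. Proof. unfold lle; rewrite <- meetA, meetxx; reflexivity. Qed.
Lemma lle_meetP w x y : w <= x -> w <= y -> w <= x ⊓ y.
Proof. unfold lle; intros Hx Hy; rewrite meetA, Hx, Hy; reflexivity. Qed.
Lemma lle_joinl x y : x <= x ⊔ y. Proof. apply meetKU. Qed.
Lemma lle_joinr x y : y <= x ⊔ y. Proof. unfold lle; rewrite joinC; apply meetKU. Qed.
Lemma lle_joinP x y w : x <= w -> y <= w -> x ⊔ y <= w.
Proof. rewrite !lle_join; intros Hx Hy; rewrite <- joinA, Hy, Hx; reflexivity. Qed.
Lemma lle_meet2r x y w : x <= y -> x ⊓ w <= y ⊓ w.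
Proof.
  intro H; apply lle_meetP; [eapply lle_trans; [apply lle_meetl | exact H] | apply lle_meetr].
Qed.

Lemma meet_joinr_absorb x y w : x ⊓ (y ⊔ w) ⊓ y = x ⊓ y.
Proof. rewrite <- meetA, (meetC _ y), meetKU; reflexivity. Qed.
Lemma join_meet_lle_meet_join x y w : (x ⊓ y) ⊔ (x ⊓ w) <= x ⊓ (y ⊔ w).
Proof.
  apply lle_joinP; apply lle_meetP; try apply lle_meetl;
    eapply lle_trans; try apply lle_meetr; [apply lle_joinl | apply lle_joinr].
Qed.
End Lattice.

Section LGroup.
Context {G : Type} {add : G -> G -> G} {opp : G -> G} {zero : G} {join meet : G -> G -> G} {u : G}.
Hypothesis HG : is_ucl_group add opp zero join meet u.
Local Notation "x + y" := (add x y) : alg_scope.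
Local Notation "- x" := (opp x) : alg_scope.
Local Notation "x - y" := (add x (opp y)) : alg_scope.
Local Notation "0" := zero : alg_scope.
Local Notation "x *+ n" := (nmul add zero n x) (at level 40, left associativity) : alg_scope.
Local Notation "x ⊔ y" := (join x y) : alg_scope.
Local Notation "x ⊓ y" := (meet x y) : alg_scope.
Local Notation "x <= y" := (lle meet x y) : alg_scope.
Local Open Scope alg_scope.

Let HC : is_com_monoid add zero. Proof. apply HG. Qed.
Let HL : is_lattice join meet. Proof. apply HG. Qed.

Lemma lg_addNr x : - x + x = 0. Proof. apply HG. Qed.
Lemma lg_addrN x : x - x = 0. Proof. rewrite (cm_addC HC); apply lg_addNr. Qed.
Lemma lg_addrK x w : x + w - w = x.
Proof. rewrite <- (cm_addA HC), lg_addrN, (cm_add0r HC); reflexivity. Qed.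
Lemma lg_addrNK x w : x - w + w = x.
Proof. rewrite <- (cm_addA HC), lg_addNr, (cm_add0r HC); reflexivity. Qed.
Lemma lg_addrNC x c : x + (c - x) = c.
Proof. rewrite (cm_addCA HC), lg_addrN, (cm_add0r HC); reflexivity. Qed.
Lemma lg_addIr x y w : x + w = y + w -> x = y.
Proof. intro H; rewrite <- (lg_addrK x w), <- (lg_addrK y w), H; reflexivity. Qed.
Lemma lg_addrI x y w : w + x = w + y -> x = y.
Proof. rewrite !(cm_addC HC w); apply lg_addIr. Qed.
Lemma lg_subKr c x : c - (c - x) = x.
Proof. apply (lg_addIr _ _ (c - x)); rewrite lg_addrNK, (cm_addC HC x), lg_addrNK; reflexivity. Qed.

Lemma lg_ler_add2r x y w : x + w <= y + w <-> x <= y.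
Proof.
  split; [|apply HG]. intro H.
  rewrite <- (lg_addrK x w), <- (lg_addrK y w). apply HG, H.
Qed.
Lemma lg_ler_sub2l x y c : x <= y -> c - y <= c - x.
Proof.
  intro H. apply (lg_ler_add2r _ _ (c - x - y)) in H.
  rewrite (cm_addA HC x), lg_addrNC in H.
  rewrite (cm_addCA HC y), lg_addrN, (cm_add0r HC) in H. exact H.
Qed.
Lemma lg_oppr_le0 x : 0 <= x -> - x <= 0.
Proof. intro H; rewrite <- (lg_ler_add2r _ _ x), lg_addNr, (cm_add0l HC); exact H. Qed.

Lemma lg_joinDr x y w : (x ⊔ y) + w = (x + w) ⊔ (y + w).
Proof.
  apply (lle_antisym HL).
  - rewrite <- (lg_ler_add2r _ _ (- w)), lg_addrK.
    apply (lle_joinP HL); rewrite <- lg_ler_add2r, lg_addrNK;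
      [apply (lle_joinl HL) | apply (lle_joinr HL)].
  - apply (lle_joinP HL); apply lg_ler_add2r; [apply (lle_joinl HL) | apply (lle_joinr HL)].
Qed.
Lemma lg_meetDr x y w : (x ⊓ y) + w = (x + w) ⊓ (y + w).
Proof.
  apply (lle_antisym HL).
  - apply (lle_meetP HL); apply lg_ler_add2r; [apply (lle_meetl HL) | apply (lle_meetr HL)].
  - rewrite <- (lg_ler_add2r _ _ (- w)), lg_addrK.
    apply (lle_meetP HL); rewrite <- lg_ler_add2r, lg_addrNK;
      [apply (lle_meetl HL) | apply (lle_meetr HL)].
Qed.

(* [x |-> c - x] is an order-reversing involution, so it exchanges joins and meets. *)
Lemma lg_sub_join c x y : c - (x ⊔ y) = (c - x) ⊓ (c - y).
Proof.
  apply (lle_antisym HL).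
  - apply (lle_meetP HL); apply lg_ler_sub2l; [apply (lle_joinl HL) | apply (lle_joinr HL)].
  - set (m := (c - x) ⊓ (c - y)).
    assert (Hxy : x ⊔ y <= c - m).
    { apply (lle_joinP HL); [rewrite <- (lg_subKr c x) at 1 | rewrite <- (lg_subKr c y) at 1];
        apply lg_ler_sub2l; [apply (lle_meetl HL) | apply (lle_meetr HL)]. }
    apply (lg_ler_sub2l _ _ c) in Hxy. rewrite lg_subKr in Hxy. exact Hxy.
Qed.

Lemma lg_meet_add_join x y : (x ⊓ y) + (x ⊔ y) = x + y.
Proof.
  assert (E : (x + y) - (x ⊔ y) = x ⊓ y).
  { rewrite lg_sub_join, lg_addrK, (cm_addC HC x y), lg_addrK, (meetC HL); reflexivity. }
  rewrite <- E, lg_addrNK; reflexivity.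
Qed.

Lemma lg_join_add_of_meet_eq d e v : d ⊓ v = e ⊓ v -> (d ⊔ v) + e = (e ⊔ v) + d.
Proof.
  intro H. apply (lg_addrI _ _ (d ⊓ v)).
  rewrite (cm_addA HC), lg_meet_add_join, H at 1.
  rewrite (cm_addA HC), lg_meet_add_join.
  ac_solve HC.
Qed.

(* With [d := x ⊓ (y ⊔ w)] and [e := (x ⊓ y) ⊔ (x ⊓ w)], both [d] and [e] meet [y] in [x ⊓ y]
   and [w] in [x ⊓ w]; the previous lemma then gives [(y ⊔ w) + e = (y ⊔ w) + d]. *)
Lemma lg_meet_joinDr x y w : x ⊓ (y ⊔ w) = (x ⊓ y) ⊔ (x ⊓ w).
Proof.
  set (d := x ⊓ (y ⊔ w)); set (e := (x ⊓ y) ⊔ (x ⊓ w)).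
  assert (Hed : e <= d) by apply (join_meet_lle_meet_join HL).
  assert (Hd : d <= y ⊔ w) by apply (lle_meetr HL).
  assert (He : e <= y ⊔ w) by exact (lle_trans HL _ _ _ Hed Hd).
  assert (Hmeet : forall v, x ⊓ v <= e -> d ⊓ v = x ⊓ v -> d ⊓ v = e ⊓ v).
  { intros v Hxe Hdv. apply (lle_antisym HL).
    - rewrite Hdv. apply (lle_meetP HL); [exact Hxe | apply (lle_meetr HL)].
    - apply (lle_meet2r HL), Hed. }
  assert (Hy : (d ⊔ y) + e = (e ⊔ y) + d).
  { apply lg_join_add_of_meet_eq, Hmeet; [apply (lle_joinl HL) | apply (meet_joinr_absorb HL)]. }
  assert (Hw : (d ⊔ w) + e = (e ⊔ w) + d).
  { apply lg_join_add_of_meet_eq, Hmeet; [apply (lle_joinr HL) |].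
    unfold d; rewrite (joinC HL y w); apply (meet_joinr_absorb HL). }
  assert (J : ((d ⊔ y) ⊔ (d ⊔ w)) + e = ((e ⊔ y) ⊔ (e ⊔ w)) + d).
  { rewrite (lg_joinDr (d ⊔ y)), (lg_joinDr (e ⊔ y)), Hy, Hw; reflexivity. }
  rewrite !(joinACA_idem HL), (proj1 (lle_join HL _ _) Hd),
    (proj1 (lle_join HL _ _) He) in J.
  symmetry; exact (lg_addrI _ _ _ J).
Qed.

Lemma lg_ler_add x y a b : x <= y -> a <= b -> x + a <= y + b.
Proof.
  intros Hxy Hab. apply (lle_trans HL _ (y + a)); [apply lg_ler_add2r, Hxy|].
  rewrite !(cm_addC HC y); apply lg_ler_add2r, Hab.
Qed.
Lemma lg_ler_addr x y : 0 <= y -> x <= x + y.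
Proof.
  intro H. rewrite <- (cm_add0r HC x) at 1. apply lg_ler_add; [apply (lle_refl HL) | exact H].
Qed.
Lemma lg_ger_addl x y : y <= 0 -> y + x <= x.
Proof.
  intro H. rewrite <- (cm_add0l HC x) at 2. apply lg_ler_add; [exact H | apply (lle_refl HL)].
Qed.

Lemma lg_nmul0 n : 0 *+ n = 0.
Proof. induction n as [|n IH]; simpl; [|rewrite IH, (cm_add0l HC)]; reflexivity. Qed.
Lemma lg_ler_nmul x y n : x <= y -> x *+ n <= y *+ n.
Proof.
  intro H; induction n as [|n IH]; simpl; [apply (lle_refl HL) | apply lg_ler_add; assumption].
Qed.
Lemma lg_nmul_ge0 x n : 0 <= x -> 0 <= x *+ n.
Proof. intro H; pose proof (lg_ler_nmul _ _ n H) as Hn; rewrite lg_nmul0 in Hn; exact Hn. Qed.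
Lemma lg_nmul_le0 x n : x <= 0 -> x *+ n <= 0.
Proof. intro H; pose proof (lg_ler_nmul _ _ n H) as Hn; rewrite lg_nmul0 in Hn; exact Hn. Qed.

Lemma lg_nmul_addN x n : (- x) *+ n + x *+ n = 0.
Proof.
  induction n as [|n IH]; simpl; [apply (cm_add0l HC)|].
  transitivity ((- x + x) + ((- x) *+ n + x *+ n)); [ac_solve HC|].
  rewrite IH, lg_addNr, (cm_add0l HC); reflexivity.
Qed.

Lemma lg_unit_bounds g : exists n, (0 < n)%nat /\ (- u) *+ n <= g /\ g <= u *+ n.
Proof.
  assert (Hu : 0 <= u) by apply HG.
  assert (Hbound : forall h, exists n, h <= u *+ n) by apply HG.
  destruct (Hbound g) as [k Hk], (Hbound (- g)) as [m Hm].
  exists (S (k + m)); split; [lia | split].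
  - assert (Hmg : (- u) *+ m <= g).
    { rewrite <- (lg_ler_add2r _ _ (g + (- u) *+ m)) in Hm.
      rewrite (cm_addA HC (- g)), lg_addNr, (cm_add0l HC) in Hm.
      rewrite (cm_addCA HC (u *+ m)), (cm_addC HC (u *+ m)), lg_nmul_addN,
        (cm_add0r HC) in Hm.
      exact Hm. }
    change (S (k + m)) with (S k + m)%nat. rewrite (cm_nmulD HC).
    eapply (lle_trans HL); [apply lg_ger_addl | exact Hmg].
    apply lg_nmul_le0, lg_oppr_le0, Hu.
  - replace (S (k + m)) with (k + S m)%nat by lia. rewrite (cm_nmulD HC).
    eapply (lle_trans HL); [exact Hk | apply lg_ler_addr].
    apply lg_nmul_ge0, Hu.
Qed.
End LGroup.

Section LGroupSubalgebra.
Context {M G : Type} {add join meet : M -> M -> M} {zero one mone : M}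
  {gadd : G -> G -> G} {gopp : G -> G} {gzero : G} {gjoin gmeet : G -> G -> G} {u : G}
  {f : M -> G}.
Hypothesis HG : is_ucl_group gadd gopp gzero gjoin gmeet u.
Hypothesis Hf : is_embedding add join meet zero one mone gadd gjoin gmeet gzero u (gopp u) f.

Let HC : is_com_monoid gadd gzero. Proof. apply HG. Qed.
Let HL : is_lattice gjoin gmeet. Proof. apply HG. Qed.

Lemma lgroup_subalgebra_cancellative : cancellative add.
Proof.
  destruct Hf as (f_inj & f_add & _).
  intros x y w E. apply f_inj, (lg_addIr HG _ _ (f w)). rewrite <- !f_add, E; reflexivity.
Qed.

Lemma lgroup_subalgebra_ucdl_monoid : is_ucdl_monoid add join meet zero one mone.
Proof.
  destruct Hf as (f_inj & f_add & f_join & f_meet & f_zero & f_one & f_mone).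
  assert (f_nmul : forall n x, f (nmul add zero n x) = nmul gadd gzero n (f x))
    by (apply nmul_morph; assumption).
  unfold lle; repeat split; intros;
    try (apply f_inj; repeat (rewrite f_add || rewrite f_join || rewrite f_meet
                              || rewrite f_zero || rewrite f_one || rewrite f_mone)).
  - apply (joinA HL).
  - apply (meetA HL).
  - apply (joinC HL).
  - apply (meetC HL).
  - apply (joinKI HL).
  - apply (meetKU HL).
  - apply (lg_meet_joinDr HG).
  - apply (cm_addA HC).
  - apply (cm_addC HC).
  - apply (cm_add0l HC).
  - rewrite !(cm_addC HC (f x)); apply (lg_joinDr HG).
  - rewrite !(cm_addC HC (f x)); apply (lg_meetDr HG).
  - apply (lg_addNr HG).
  - apply (lg_oppr_le0 HG); apply HG.
  - apply HG.
  - destruct (lg_unit_bounds HG (f x)) as (n & Hn & Hlo & Hhi).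
    exists n; split; [exact Hn | split; apply f_inj; rewrite f_meet, f_nmul].
    + rewrite f_mone; exact Hlo.
    + rewrite f_one; exact Hhi.
Qed.
End LGroupSubalgebra.

Section Quotient.
Context {T : Type} (R : T -> T -> Prop) {HR : Equivalence R}.

(* Classes are represented as predicates; proof irrelevance together with propositional and
   functional extensionality make equality of classes coincide with [R]. *)
Definition quot : Type := {P : T -> Prop | exists p, P = R p}.
Definition class_of (p : T) : quot := exist _ (R p) (ex_intro _ p eq_refl).
Definition repr (x : quot) : T := proj1_sig (constructive_indefinite_description _ (proj2_sig x)).

Lemma eq_class_of p q : class_of p = class_of q <-> R p q.
Proof.
  split; intro E.
  - apply (f_equal (fun x => proj1_sig x q)) in E; simpl in E. rewrite E; reflexivity.
  - apply subset_eq_compat, functional_extensionality; intro r.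
    apply propositional_extensionality; split; intro H; [rewrite <- E | rewrite E]; exact H.
Qed.

Lemma class_of_repr x : class_of (repr x) = x.
Proof.
  unfold repr; destruct (constructive_indefinite_description _ _) as [p Hp]; simpl.
  destruct x as [P HP]; apply subset_eq_compat; simpl in *; auto.
Qed.

Lemma class_of_surj x : exists p, x = class_of p.
Proof. exists (repr x); symmetry; apply class_of_repr. Qed.

Lemma repr_class_of p : R (repr (class_of p)) p.
Proof. apply eq_class_of, class_of_repr. Qed.

Definition quot_lift1 (op : T -> T) (x : quot) : quot := class_of (op (repr x)).
Definition quot_lift2 (op : T -> T -> T) (x y : quot) : quot := class_of (op (repr x) (repr y)).

Lemma quot_lift1_class op {Hop : Proper (R ==> R) op} p :
  quot_lift1 op (class_of p) = class_of (op p).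
Proof. apply eq_class_of, Hop, repr_class_of. Qed.

Lemma quot_lift2_class op {Hop : Proper (R ==> R ==> R) op} p q :
  quot_lift2 op (class_of p) (class_of q) = class_of (op p q).
Proof. apply eq_class_of, Hop; apply repr_class_of. Qed.

Lemma proper2_of_comm (op : T -> T -> T) :
  (forall p q, op p q = op q p) -> (forall p p' q, R p p' -> R (op p q) (op p' q)) ->
  Proper (R ==> R ==> R) op.
Proof.
  intros op_comm op_l p p' Hp q q' Hq. transitivity (op p' q); [apply op_l, Hp|].
  rewrite !(op_comm p'); apply op_l, Hq.
Qed.
End Quotient.

Section DifferenceGroup.
Context {M : Type} {add join meet : M -> M -> M} {zero one mone : M}.
Hypothesis Hm : is_ucdl_monoid add join meet zero one mone.
Hypothesis Hc : cancellative add.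
Local Notation "x + y" := (add x y) : alg_scope.
Local Notation "0" := zero : alg_scope.
Local Notation "x *+ n" := (nmul add zero n x) (at level 40, left associativity) : alg_scope.
Local Notation "x ⊔ y" := (join x y) : alg_scope.
Local Notation "x ⊓ y" := (meet x y) : alg_scope.
Local Notation "x <= y" := (lle meet x y) : alg_scope.
Local Open Scope alg_scope.

Let HC : is_com_monoid add zero. Proof. apply Hm. Qed.
Let HL : is_lattice join meet. Proof. apply Hm. Qed.

Lemma ucdl_addJr x y w : (y ⊔ w) + x = (y + x) ⊔ (w + x).
Proof. rewrite !(cm_addC HC _ x); apply Hm. Qed.
Lemma ucdl_addMr x y w : (y ⊓ w) + x = (y + x) ⊓ (w + x).
Proof. rewrite !(cm_addC HC _ x); apply Hm. Qed.
Lemma ucdl_ler_add2r x y w : x <= y -> x + w <= y + w.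
Proof. unfold lle; intro H; rewrite <- ucdl_addMr, H; reflexivity. Qed.
Lemma ucdl_nmul_mone_one n : mone *+ n + one *+ n = 0.
Proof.
  induction n as [|n IH]; simpl; [apply (cm_add0l HC)|].
  transitivity ((mone + one) + (mone *+ n + one *+ n)); [ac_solve HC|].
  rewrite IH, (cm_add0r HC); apply Hm.
Qed.
Lemma ucdl_le_nmul_one_add a b : exists n, a <= one *+ n + b.
Proof.
  assert (Hbound : forall x, exists n, (0 < n)%nat /\ mone *+ n <= x /\ x <= one *+ n) by apply Hm.
  destruct (Hbound a) as (k & _ & _ & Hk), (Hbound b) as (m & _ & Hb & _).
  exists (k + m)%nat. apply (lle_trans HL _ _ _ Hk).
  replace (one *+ k) with (mone *+ m + (one *+ k + one *+ m)).
  - rewrite (cm_nmulD HC), (cm_addC HC _ b). apply ucdl_ler_add2r, Hb.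
  - rewrite (cm_addCA HC), ucdl_nmul_mone_one; apply (cm_add0r HC).
Qed.

(* A pair [(a, b)] stands for the formal difference [a - b]. *)
Definition diff_eqv (p q : M * M) : Prop := fst p + snd q = fst q + snd p.

(* Transitivity is where cancellativity is needed. *)
Instance diff_eqv_equiv : Equivalence diff_eqv.
Proof.
  split.
  - intro p; reflexivity.
  - intros p q; unfold diff_eqv; auto.
  - intros [a b] [c d] [e g]; unfold diff_eqv; simpl; intros Hpq Hqr.
    apply (Hc _ _ d).
    transitivity ((a + d) + g); [ac_solve HC|]. rewrite Hpq.
    transitivity ((c + g) + b); [ac_solve HC|]. rewrite Hqr. ac_solve HC.
Qed.

Definition padd (p q : M * M) : M * M := (fst p + fst q, snd p + snd q).
Definition popp (p : M * M) : M * M := (snd p, fst p).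
Definition pjoin (p q : M * M) : M * M := ((fst p + snd q) ⊔ (fst q + snd p), snd p + snd q).
Definition pmeet (p q : M * M) : M * M := ((fst p + snd q) ⊓ (fst q + snd p), snd p + snd q).

Instance popp_proper : Proper (diff_eqv ==> diff_eqv) popp.
Proof.
  intros [a b] [c d]; unfold diff_eqv; simpl; intro H.
  rewrite (cm_addC HC b), (cm_addC HC d); auto.
Qed.
Instance padd_proper : Proper (diff_eqv ==> diff_eqv ==> diff_eqv) padd.
Proof.
  refine (proper2_of_comm diff_eqv _ _ _).
  - intros [a b] [c d]; unfold padd; simpl; rewrite (cm_addC HC a), (cm_addC HC b); reflexivity.
  - intros [a b] [a' b'] [c d]; unfold diff_eqv, padd; simpl; intro H.
    transitivity ((a + b') + (c + d)); [ac_solve HC|]. rewrite H; ac_solve HC.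
Qed.
Instance pjoin_proper : Proper (diff_eqv ==> diff_eqv ==> diff_eqv) pjoin.
Proof.
  refine (proper2_of_comm diff_eqv _ _ _).
  - intros [a b] [c d]; unfold pjoin; simpl; rewrite (joinC HL), (cm_addC HC b); reflexivity.
  - intros [a b] [a' b'] [c d]; unfold diff_eqv, pjoin; simpl; intro H.
    rewrite !ucdl_addJr; f_equal; [|ac_solve HC].
    transitivity ((a + b') + (d + d)); [ac_solve HC|]. rewrite H; ac_solve HC.
Qed.
Instance pmeet_proper : Proper (diff_eqv ==> diff_eqv ==> diff_eqv) pmeet.
Proof.
  refine (proper2_of_comm diff_eqv _ _ _).
  - intros [a b] [c d]; unfold pmeet; simpl; rewrite (meetC HL), (cm_addC HC b); reflexivity.
  - intros [a b] [a' b'] [c d]; unfold diff_eqv, pmeet; simpl; intro H.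
    rewrite !ucdl_addMr; f_equal; [|ac_solve HC].
    transitivity ((a + b') + (d + d)); [ac_solve HC|]. rewrite H; ac_solve HC.
Qed.

Definition DG : Type := quot diff_eqv.
Definition dg (a b : M) : DG := class_of diff_eqv (a, b).
Definition dg_add : DG -> DG -> DG := quot_lift2 diff_eqv padd.
Definition dg_opp : DG -> DG := quot_lift1 diff_eqv popp.
Definition dg_join : DG -> DG -> DG := quot_lift2 diff_eqv pjoin.
Definition dg_meet : DG -> DG -> DG := quot_lift2 diff_eqv pmeet.
Definition dg_zero : DG := dg 0 0.
Definition dg_of (x : M) : DG := dg x 0.

Lemma dg_eq a b c d : dg a b = dg c d <-> a + d = c + b.
Proof. exact (eq_class_of diff_eqv (a, b) (c, d)). Qed.
Lemma dg_addE a b c d : dg_add (dg a b) (dg c d) = dg (a + c) (b + d).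
Proof. exact (quot_lift2_class diff_eqv padd (a, b) (c, d)). Qed.
Lemma dg_oppE a b : dg_opp (dg a b) = dg b a.
Proof. exact (quot_lift1_class diff_eqv popp (a, b)). Qed.
Lemma dg_joinE a b c d : dg_join (dg a b) (dg c d) = dg ((a + d) ⊔ (c + b)) (b + d).
Proof. exact (quot_lift2_class diff_eqv pjoin (a, b) (c, d)). Qed.
Lemma dg_meetE a b c d : dg_meet (dg a b) (dg c d) = dg ((a + d) ⊓ (c + b)) (b + d).
Proof. exact (quot_lift2_class diff_eqv pmeet (a, b) (c, d)). Qed.
Lemma dg_surj x : exists a b, x = dg a b.
Proof. destruct (class_of_surj diff_eqv x) as [[a b] ->]; exists a, b; reflexivity. Qed.

Ltac dg_case x a b := destruct (dg_surj x) as (a & b & ->).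
Ltac dg_simpl :=
  repeat (rewrite dg_addE || rewrite dg_oppE || rewrite dg_joinE || rewrite dg_meetE).

Lemma dg_com_monoid : is_com_monoid dg_add dg_zero.
Proof.
  unfold dg_zero; repeat split.
  - intros x y w; dg_case x a b; dg_case y c d; dg_case w e g; dg_simpl.
    rewrite !(cm_addA HC); reflexivity.
  - intros x y; dg_case x a b; dg_case y c d; dg_simpl.
    rewrite (cm_addC HC a), (cm_addC HC b); reflexivity.
  - intros x; dg_case x a b; dg_simpl.
    rewrite !(cm_add0l HC); reflexivity.
Qed.

Lemma dg_lattice : is_lattice dg_join dg_meet.
Proof.
  repeat split; intros x y; dg_case x a b; dg_case y c d;
    try (intros w; dg_case w e g); dg_simpl.
  - rewrite !ucdl_addJr, (joinA HL). f_equal; [f_equal; [f_equal|] |]; ac_solve HC.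
  - rewrite !ucdl_addMr, (meetA HL). f_equal; [f_equal; [f_equal|] |]; ac_solve HC.
  - rewrite (joinC HL), (cm_addC HC b); reflexivity.
  - rewrite (meetC HL), (cm_addC HC b); reflexivity.
  - apply dg_eq. rewrite ucdl_addMr.
    replace ((a + d) + b) with (a + (b + d)) by ac_solve HC.
    rewrite (joinKI HL). ac_solve HC.
  - apply dg_eq. rewrite ucdl_addJr.
    replace ((a + d) + b) with (a + (b + d)) by ac_solve HC.
    rewrite (meetKU HL). ac_solve HC.
Qed.

Lemma dg_meetDr x y w : dg_add (dg_meet x y) w = dg_meet (dg_add x w) (dg_add y w).
Proof.
  dg_case x a b; dg_case y c d; dg_case w e g; dg_simpl.
  apply dg_eq. rewrite !ucdl_addMr. f_equal; ac_solve HC.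
Qed.

Lemma dg_of_add x y : dg_of (x + y) = dg_add (dg_of x) (dg_of y).
Proof. unfold dg_of; dg_simpl; rewrite (cm_add0l HC); reflexivity. Qed.

Lemma dg_ucl_group : is_ucl_group dg_add dg_opp dg_zero dg_join dg_meet (dg_of one).
Proof.
  repeat split; try apply dg_com_monoid; try apply dg_lattice.
  - intros x; dg_case x a b; unfold dg_zero; dg_simpl; apply dg_eq.
    rewrite (cm_add0l HC), (cm_add0r HC); apply (cm_addC HC).
  - intros x y w H; unfold lle in *; rewrite <- dg_meetDr, H; reflexivity.
  - unfold lle, dg_zero, dg_of; dg_simpl; apply dg_eq.
    rewrite !(cm_add0r HC). apply Hm.
  - intros x; dg_case x a b.
    destruct (ucdl_le_nmul_one_add a b) as [n Hle]; exists n.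
    rewrite <- (nmul_morph add zero dg_add dg_zero dg_of eq_refl dg_of_add).
    unfold lle, dg_of; dg_simpl; apply dg_eq.
    rewrite !(cm_add0r HC), Hle; reflexivity.
Qed.

Lemma dg_of_embedding :
  is_embedding add join meet zero one mone dg_add dg_join dg_meet dg_zero
    (dg_of one) (dg_opp (dg_of one)) dg_of.
Proof.
  unfold dg_of; repeat split; intros; dg_simpl; try apply dg_eq.
  - rewrite <- (cm_add0r HC x), <- (cm_add0r HC y); apply dg_eq; assumption.
  - rewrite (cm_add0l HC); reflexivity.
  - rewrite !(cm_add0l HC), !(cm_add0r HC); reflexivity.
  - rewrite !(cm_add0l HC), !(cm_add0r HC); reflexivity.
  - rewrite (cm_add0l HC); apply Hm.
Qed.
End DifferenceGroup.

Theorem mainTheorem3 (M : Type) (add join meet : M -> M -> M) (zero one mone : M) :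
  (exists (G : Type) (gadd : G -> G -> G) (gopp : G -> G) (gzero : G)
          (gjoin gmeet : G -> G -> G) (u : G) (f : M -> G),
      is_ucl_group gadd gopp gzero gjoin gmeet u /\
      is_embedding add join meet zero one mone gadd gjoin gmeet gzero u (gopp u) f)
  <->
  (is_ucdl_monoid add join meet zero one mone /\ cancellative add).
Proof.
  split.
  - intros (G & gadd & gopp & gzero & gjoin & gmeet & u & f & HG & Hf).
    exact (conj (lgroup_subalgebra_ucdl_monoid HG Hf) (lgroup_subalgebra_cancellative HG Hf)).
  - intros [Hm Hc].
    do 8 eexists. exact (conj (dg_ucl_group Hm Hc) (dg_of_embedding Hm Hc)).
Qed.
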